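(* Work in Cramér's random model: let $\mathcal{P}$ be a random subset of the integers $\ge 3$ in which each integer $m \ge 3$ is included independently with probability $1/\ln m$, and let $q_1 < q_2 < \cdots$ be the elements of $\mathcal{P}$ listed in increasing order. For $n,k \ge 1$ put $T_k(n) = q_n + q_{n+1} + \cdots + q_{n+k-1}$. Then, with probability $1$, for every $n \ge 1$ there exists an odd integer $k \ge 3$ such that $T_k(n) \in \mathcal{P}$. Equivalently, the probability that there exists $n$ such that $T_k(n) \notin \mathcal{P}$ for all odd $k \ge 3$ is zero.
   Context: Cramér's probabilistic model of the primes replaces the set of primes by a random set in which each integer $m\ge 3$ is declared ''prime'' independently with probability $1/\ln m$, where $\ln$ is the natural logarithm. The sums $T_k(n)$ are the model analogue of sums of $k$ consecutive primes starting at the $n$-th prime. *)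

From HB Require Import structures.
From mathcomp Require Import all_boot all_order all_algebra.
From mathcomp Require Import all_classical all_reals all_analysis.
Set Implicit Arguments. Unset Strict Implicit. Unset Printing Implicit Defensive.
Import Order.TTheory GRing.Theory Num.Theory.
Local Open Scope classical_set_scope.
Local Open Scope ring_scope.

(* A random set of naturals is given by a family of events E m = {m \in P}. *)

Definition mutually_independent_events {d} {T : measurableType d} {R : realType}
  (P : probability T R) (E : nat -> set T) : Prop :=
  forall s : seq nat, uniq s ->
    P (\bigcap_(i in [set` s]) E i) = (\prod_(i <- s) P (E i))%E.

Definition cramer_model {d} {T : measurableType d} {R : realType}
  (P : probability T R) (E : nat -> set T) : Prop :=
  [/\ (forall m, measurable (E m)),
      mutually_independent_events P E,
      (forall m, (3 <= m)%N -> P (E m) = ((ln (m%:R : R))^-1)%:E) &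
      (forall m, (m < 3)%N -> E m = set0)].

(* Smallest element of the random set (at outcome w) strictly larger than a;
   junk value 0 if there is none. *)
Definition next_elt {T : Type} (E : nat -> set T) (w : T) (a : nat) : nat :=
  match pselect (exists m, (a < m)%N && `[< E m w >]) with
  | left h => ex_minn h
  | right _ => 0%N
  end.

(* q n = n-th element (1-indexed) of the random set, listed increasingly. *)
Definition qelt {T : Type} (E : nat -> set T) (w : T) (n : nat) : nat :=
  iter n (next_elt E w) 0%N.

Definition Tsum {T : Type} (E : nat -> set T) (w : T) (k n : nat) : nat :=
  (\sum_(i < k) qelt E w (n + i))%N.

From HB Require Import structures.
From mathcomp Require Import all_boot all_order all_algebra.
From mathcomp Require Import all_classical all_reals all_analysis.
From mathcomp Require Import ring lra zify.
Set Implicit Arguments. Unset Strict Implicit. Unset Printing Implicit Defensive.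
Import Order.TTheory GRing.Theory Num.Theory.
Local Open Scope classical_set_scope.
Local Open Scope ring_scope.

(* Fix n and look at the odd sums tau_j = T_{2j+3}(n), j = 0, 1, ....  Whether
   the first n+2j+2 elements exist and what they are is decided by the events
   {m in P} with m < tau_j, so tau_j is a stopping time for the filtration of
   these events and {tau_j in P} is, given everything seen so far, a fresh event
   of probability 1/ln tau_j.  If tau_j <= B_j for a deterministic B_j, the
   chance that all of tau_0, ..., tau_{J-1} miss P is at most
   prod_j (1 - 1/ln B_j) <= (1 + sum_j 1/ln B_j)^-1.  When every interval
   (4^i, 4^(i+1)] with i >= c contains an element, q_m <= 4^(c+m) and one can
   take B_j = (2j+3) 4^(c+n+2j+2), whose logarithm is O(j); by the divergence of
   the harmonic series the bound tends to 0 as J grows.  One of these intervals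
   is empty only with probability O(2^-c), so letting c grow shows that failure
   at n is a null event, and a countable union over n concludes. *)

Section RealProbability.
Variables (R : realType) (d : measure_display) (T : measurableType d)
  (P : probability T R).

Definition pr (A : set T) : R := fine (P A).

Lemma prE A : measurable A -> P A = (pr A)%:E.
Proof. by move=> mA; rewrite /pr fineK // fin_num_measure. Qed.

Lemma pr_ge0 A : measurable A -> 0 <= pr A.
Proof. by move=> mA; rewrite -lee_fin -prE. Qed.

Lemma pr_le1 A : measurable A -> pr A <= 1.
Proof. by move=> mA; rewrite -lee_fin -prE // probability_le1. Qed.

Lemma pr_setT : pr setT = 1.
Proof. by rewrite /pr probability_setT. Qed.

Lemma pr_set0 : pr set0 = 0.
Proof. by rewrite /pr measure0. Qed.

Lemma pr_le A B : measurable A -> measurable B -> A `<=` B -> pr A <= pr B.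
Proof. by move=> mA mB AB; rewrite -lee_fin -!prE // le_measure ?inE. Qed.

Lemma pr_setU_le A B : measurable A -> measurable B -> pr (A `|` B) <= pr A + pr B.
Proof.
move=> mA mB; rewrite -lee_fin EFinD -!prE //; last exact: measurableU.
exact: measureU2.
Qed.

Lemma pr_setID A B : measurable A -> measurable B ->
  pr A = pr (A `&` B) + pr (A `&` ~` B).
Proof.
move=> mA mB.
have mIC : measurable (A `&` ~` B) by apply: measurableI => //; exact: measurableC.
apply/EFin_inj; rewrite EFinD -!prE //; last exact: measurableI.
by rewrite (measureDI _ mA mB) setDE addeC.
Qed.

Lemma pr_level_sets (D : set T) (f : T -> nat) N :
  (forall w, D w -> (f w < N)%N) ->
  (forall t, measurable (D `&` [set w | f w = t])) ->
  measurable D /\ pr D = \sum_(t < N) pr (D `&` [set w | f w = t]).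
Proof.
move=> DN mDt; pose Dt t := D `&` [set w | f w = t].
have DE : D = \big[setU/set0]_(t < N) Dt t.
  rewrite -bigcup_mkord; apply/seteqP; split => [w Dw|w [t _ []//]].
  by exists (f w) => //=; apply: DN.
have mD : measurable D by rewrite DE; apply: bigsetU_measurable => t _; exact: mDt.
split => //; apply/EFin_inj; rewrite -prE // -sumEFin {1}DE.
rewrite measure_semi_additive_ord_I -?DE //.
- by apply: eq_bigr => t _; exact: prE (mDt t).
- by move=> t _; exact: mDt.
- by move=> s t _ _ [w [[_ /= <-] [_ /= <-]]].
Qed.

End RealProbability.

Section DeterminedEvents.
Variables (T : Type) (E : nat -> set T).

Definition agree_below t (w w' : T) := forall i, (i < t)%N -> (E i w <-> E i w').

Definition determined t (D : set T) := forall w w', agree_below t w w' -> D w -> D w'.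

Lemma agree_below_sym t w w' : agree_below t w w' -> agree_below t w' w.
Proof. by move=> H i it; split => /(H i it). Qed.

Lemma agree_below_trans t w1 w2 w3 :
  agree_below t w1 w2 -> agree_below t w2 w3 -> agree_below t w1 w3.
Proof. by move=> H1 H2 i it; rewrite (propext (H1 i it)) (propext (H2 i it)). Qed.

Definition hull_below t (D A : set T) :=
  [set w | exists2 w', agree_below t w w' & (D `&` A) w'].

Lemma determined_hull_below t D A : determined t (hull_below t D A).
Proof.
move=> w1 w2 a12 [w' a1 DAw']; exists w' => //.
exact: agree_below_trans (agree_below_sym a12) a1.
Qed.

Lemma hull_belowI t D A : determined t.+1 D ->
  (forall w w', A w -> A w' -> (E t w <-> E t w')) ->
  D `&` A = hull_below t D A `&` A.
Proof.
move=> dD At; apply/seteqP; split=> [w [Dw Aw]|w [[w' a [Dw' Aw']] Aw]].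
  by split => //; exists w.
split => //; apply: (dD w') => // i; rewrite ltnS leq_eqVlt => /predU1P[->|it].
  exact: At.
exact: (agree_below_sym a) i it.
Qed.

Lemma determined0 D : determined 0 D -> D = set0 \/ D = setT.
Proof.
have [[w Dw] dD|nD _] := pselect (exists w, D w); last first.
  by left; apply/seteqP; split => // w Dw; apply: nD; exists w.
by right; apply/seteqP; split => // w' _; apply: (dD w).
Qed.

End DeterminedEvents.

Section Patterns.
Variables (R : realType) (d : measure_display) (T : measurableType d)
  (P : probability T R) (E : nat -> set T).
Hypothesis mE : forall m, measurable (E m).
Hypothesis indep : mutually_independent_events P E.

Definition pattern (S U : seq nat) : set T :=
  [set w | (forall i, i \in S -> E i w) /\ (forall i, i \in U -> ~ E i w)].

Lemma measurable_pattern S U : measurable (pattern S U).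
Proof.
have -> : pattern S U = \bigcap_(i in [set` S]) E i `&` \bigcap_(i in [set` U]) ~` E i.
  by apply/seteqP; split => w [HS HU]; split => i iSU; by [apply: HS | apply: HU].
apply: measurableI; apply: bigcap_measurableType => // i _; exact: measurableC.
Qed.

Lemma pattern_nil : pattern [::] [::] = setT.
Proof. by apply/seteqP; split. Qed.

Lemma patternI S U u : pattern S U `&` E u = pattern (u :: S) U.
Proof.
apply/seteqP; split=> [w [[HS HU] Eu]|w [HS HU]].
  by split=> // i; rewrite in_cons => /predU1P[->|/HS].
by split; [split=> // i iS; apply: HS; rewrite in_cons iS orbT|apply: HS; exact: mem_head].
Qed.

Lemma patternIC S U u : pattern S U `&` ~` E u = pattern S (u :: U).
Proof.
apply/seteqP; split=> [w [[HS HU] Eu]|w [HS HU]].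
  by split=> // i; rewrite in_cons => /predU1P[->|/HU].
by split; [split=> // i iU; apply: HU; rewrite in_cons iU orbT|apply: HU; exact: mem_head].
Qed.

Lemma pr_pattern S U : uniq (S ++ U) ->
  pr P (pattern S U) = \prod_(i <- S) pr P (E i) * \prod_(i <- U) (1 - pr P (E i)).
Proof.
elim: U S => [|u U IH] S uSU.
  rewrite big_nil mulr1; apply/EFin_inj; rewrite -prE; last exact: measurable_pattern.
  have -> : pattern S [::] = \bigcap_(i in [set` S]) E i by apply/seteqP; split => w //= [].
  rewrite -prodEFin indep; last by rewrite cats0 in uSU.
  by apply: eq_bigr => i _; exact: prE.
have uS : uniq ((u :: S) ++ U) by rewrite -[(u :: S) ++ U]/([:: u] ++ S ++ U) -uniq_catCA.
have uS1 : uniq (S ++ U) by move: uS => /andP[].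
have := pr_setID P (measurable_pattern S U) (mE u).
rewrite patternI patternIC (IH _ uS) (IH _ uS1) big_cons => e.
have -> : pr P (pattern S (u :: U)) =
  \prod_(i <- S) pr P (E i) * \prod_(i <- U) (1 - pr P (E i))
  - pr P (E u) * \prod_(i <- S) pr P (E i) * \prod_(i <- U) (1 - pr P (E i)).
  by rewrite e; ring.
by rewrite big_cons; ring.
Qed.

Lemma pr_pattern_consl S U u : uniq ((u :: S) ++ U) ->
  pr P (pattern (u :: S) U) = pr P (E u) * pr P (pattern S U).
Proof.
move=> uSU; have /andP[_ uSU'] := uSU.
by rewrite !pr_pattern // big_cons mulrA.
Qed.

Lemma pr_pattern_consr S U u : uniq (S ++ u :: U) ->
  pr P (pattern S (u :: U)) = (1 - pr P (E u)) * pr P (pattern S U).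
Proof.
move=> uSU; have uSU' : uniq (S ++ U).
  by move: uSU; rewrite -[u :: U]/([:: u] ++ U) uniq_catCA => /andP[].
by rewrite !pr_pattern // big_cons; ring.
Qed.

Lemma determined_indep t D : determined E t D ->
  measurable D /\ forall S U, uniq (S ++ U) -> all (leq t) (S ++ U) ->
    pr P (D `&` pattern S U) = pr P D * pr P (pattern S U).
Proof.
(* On [E t] and on its complement, [D] coincides with a set determined below [t]. *)
elim: t D => [|t IH] D dD.
  have [->|->] := determined0 dD; split => // S U _ _.
  - by rewrite set0I pr_set0 mul0r.
  - by rewrite setTI pr_setT mul1r.
have mEC : measurable (~` E t) by exact: measurableC.
pose D1 := hull_below E t D (E t); pose D0 := hull_below E t D (~` E t).
have DE1 : D `&` E t = D1 `&` E t by apply: hull_belowI => // w w' Ew Ew'.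
have DE0 : D `&` ~` E t = D0 `&` ~` E t.
  by apply: hull_belowI => // w w' Ew Ew'; split => /[!(notE Ew, notE Ew')].
have [mD1 indep1] := IH D1 (@determined_hull_below _ E t D (E t)).
have [mD0 indep0] := IH D0 (@determined_hull_below _ E t D (~` E t)).
have mD : measurable D.
  rewrite -[D]setIT -(setUCr (E t)) setIUr DE1 DE0.
  by apply: measurableU; apply: measurableI.
have split_t S U : uniq (S ++ U) -> all (leq t.+1) (S ++ U) ->
    pr P (D `&` pattern S U) =
    (pr P D1 * pr P (E t) + pr P D0 * (1 - pr P (E t))) * pr P (pattern S U).
  move=> uSU tSU; have tnSU : t \notin S ++ U.
    by apply/negP => /(allP tSU); rewrite ltnn.
  have tSU' : all (leq t) (S ++ U).
    by apply/allP => i /(allP tSU); exact: ltnW.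
  rewrite (pr_setID P (measurableI _ _ mD (measurable_pattern S U)) (mE t)).
  rewrite (setIAC D _ (E t)) (setIAC D _ (~` E t)) DE1 DE0 -!setIA.
  rewrite [E t `&` _]setIC [~` E t `&` _]setIC patternI patternIC.
  have uSU1 : uniq ((t :: S) ++ U) by rewrite /= tnSU.
  have uSU0 : uniq (S ++ t :: U) by rewrite -[t :: U]/([:: t] ++ U) uniq_catCA /= tnSU.
  have tSU1 : all (leq t) ((t :: S) ++ U) by rewrite /= leqnn.
  have tSU0 : all (leq t) (S ++ t :: U) by rewrite all_cat /= leqnn -all_cat.
  by rewrite indep1 // indep0 // pr_pattern_consl // pr_pattern_consr //; ring.
split=> // S U uSU tSU; rewrite split_t //.
by have := split_t [::] [::] isT isT; rewrite pattern_nil setIT pr_setT mulr1 => <-.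
Qed.

Lemma determined_measurable t D : determined E t D -> measurable D.
Proof. by case/determined_indep. Qed.

Lemma determined_indepC t D : determined E t D ->
  pr P (D `&` ~` E t) = pr P D * (1 - pr P (E t)).
Proof.
move=> /determined_indep[_ DU].
have pt : pattern [::] [:: t] = ~` E t by rewrite -patternIC pattern_nil setTI.
have prt : pr P (~` E t) = 1 - pr P (E t).
  by rewrite -pt pr_pattern_consr // pattern_nil pr_setT mulr1.
by rewrite -prt -pt DU //= leqnn.
Qed.

(* [tau] is a stopping time: the slice [tau = t] of [D] is decided by the events
   below [t], hence independent of [E t]. *)
Lemma pr_stopped_miss (D : set T) (tau : T -> nat) (beta : R) N :
  (forall w, D w -> (tau w < N)%N) ->
  (forall t, determined E t (D `&` [set w | tau w = t])) ->
  (forall w, D w -> beta <= pr P (E (tau w))) ->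
  measurable D /\ pr P (D `&` [set w | ~ E (tau w) w]) <= (1 - beta) * pr P D.
Proof.
move=> DN dD Dbeta; pose Dt t := D `&` [set w | tau w = t].
have mDt t : measurable (Dt t) := determined_measurable (dD t).
have DtC t : D `&` [set w | ~ E (tau w) w] `&` [set w | tau w = t] = Dt t `&` ~` E t.
  apply/seteqP; split=> w /=.
    by case=> [[Dw NEw] /= tw]; subst t.
  by case=> [[Dw /= tw] NEw]; subst t.
have [mD ->] := pr_level_sets P DN mDt.
have DXN w : (D `&` [set w | ~ E (tau w) w]) w -> (tau w < N)%N by case=> /DN.
have mDXt t : measurable (D `&` [set w | ~ E (tau w) w] `&` [set w | tau w = t]).
  by rewrite DtC; apply: measurableI => //; exact: measurableC.
have [_ ->] := pr_level_sets P DXN mDXt.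
split=> //; rewrite mulr_sumr; apply: ler_sum => t _.
rewrite DtC determined_indepC // mulrC.
have [[w [Dw /= tw]]|nDt] := pselect (exists w, Dt t w).
  apply: ler_wpM2r; first exact: pr_ge0.
  by rewrite lerD2l lerN2 -tw; exact: Dbeta.
have : Dt t = set0 by apply/seteqP; split=> // w Dtw; apply: nDt; exists w.
by rewrite /Dt => ->; rewrite pr_set0 !mulr0.
Qed.

End Patterns.

Section Enumeration.
Variables (T : Type) (E : nat -> set T).

Lemma next_eltP w a : (exists m, (a < m)%N /\ E m w) ->
  [/\ (a < next_elt E w a)%N, E (next_elt E w a) w &
      forall m, (a < m)%N -> E m w -> (next_elt E w a <= m)%N].
Proof.
move=> [m0 [am0 Em0]]; rewrite /next_elt; case: pselect => [h|[]]; last first.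
  by exists m0; rewrite am0; apply/asboolP.
case: ex_minnP => m /andP[am /asboolP Em] m_min; split=> // m' am' Em'.
by apply: m_min; rewrite am'; apply/asboolP.
Qed.

Lemma next_elt_witness w a : (a < next_elt E w a)%N -> exists m, (a < m)%N /\ E m w.
Proof.
rewrite /next_elt; case: pselect => // -[m /andP[am /asboolP Em]] _.
by exists m.
Qed.

Lemma agree_next_elt L w w' a : agree_below E L w w' -> (a < next_elt E w a)%N ->
  (next_elt E w a < L)%N -> next_elt E w' a = next_elt E w a.
Proof.
move=> ag /next_elt_witness/next_eltP[a_lt En n_min] nL.
have En' : E (next_elt E w a) w' by apply/(ag _ nL).
have [a_lt' En'' n_min'] := next_eltP (ex_intro _ _ (conj a_lt En')).
apply/eqP; rewrite eqn_leq n_min' //= n_min //.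
exact/(ag _ (leq_ltn_trans (n_min' _ a_lt En') nL)).
Qed.

Lemma qeltS w i : qelt E w i.+1 = next_elt E w (qelt E w i).
Proof. by rewrite /qelt iterS. Qed.

Definition q_increasing w N := forall i, (i < N)%N -> (qelt E w i < qelt E w i.+1)%N.

Lemma q_increasingW w N M : (M <= N)%N -> q_increasing w N -> q_increasing w M.
Proof. by move=> MN h i iM; apply: h; exact: leq_trans iM MN. Qed.

Lemma q_le w N i j : q_increasing w N -> (i <= j <= N)%N -> (qelt E w i <= qelt E w j)%N.
Proof.
move=> h /andP[ij jN]; elim: j ij jN => [|j IH]; first by rewrite leqn0 => /eqP->.
rewrite leq_eqVlt => /predU1P[-> //|/[!ltnS] ij jN].
exact: leq_trans (IH ij (ltnW jN)) (ltnW (h _ jN)).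
Qed.

Lemma q_lt w N i j : q_increasing w N -> (i < j <= N)%N -> (qelt E w i < qelt E w j)%N.
Proof.
move=> h /andP[ij jN]; apply: leq_trans (h i (leq_trans ij jN)) _.
by apply: (q_le h); rewrite ij jN.
Qed.

Lemma q_gt0 w N i : q_increasing w N -> (0 < i <= N)%N -> (0 < qelt E w i)%N.
Proof. exact: (@q_lt w N 0). Qed.

Lemma q_mem w N i : q_increasing w N -> (0 < i <= N)%N -> E (qelt E w i) w.
Proof.
case: i => [//|i] h /andP[_ iN]; rewrite qeltS.
by have := h i iN; rewrite qeltS => /next_elt_witness/next_eltP[].
Qed.

Lemma agree_q L w w' N : agree_below E L w w' -> q_increasing w N ->
  (qelt E w N < L)%N ->
  q_increasing w' N /\ forall i, (i <= N)%N -> qelt E w' i = qelt E w i.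
Proof.
move=> ag h qNL.
have q_eq i : (i <= N)%N -> qelt E w' i = qelt E w i.
  elim: i => [//|i IH] iN; rewrite !qeltS IH ?(ltnW iN) //.
  apply: (agree_next_elt ag); rewrite -qeltS; first exact: h.
  by apply: leq_ltn_trans qNL; apply: (q_le h); rewrite iN leqnn.
by split=> // i iN; rewrite !q_eq //; [exact: h | exact: ltnW].
Qed.

Lemma Tsum_ext w w' k n :
  (forall i, (i < k)%N -> qelt E w' (n + i) = qelt E w (n + i)) ->
  Tsum E w' k n = Tsum E w k n.
Proof. by move=> h; apply: eq_bigr => i _; exact: h. Qed.

Lemma TsumS w k n : Tsum E w k.+1 n = (Tsum E w k n + qelt E w (n + k))%N.
Proof. by rewrite /Tsum big_ord_recr. Qed.

Lemma Tsum_gt_last w k n : (0 < n)%N -> q_increasing w (n + k.+1) ->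
  (qelt E w (n + k.+1) < Tsum E w k.+2 n)%N.
Proof.
move=> n_gt0 h; rewrite /Tsum big_ord_recr /= big_ord_recl /= addn0.
have : (0 < qelt E w n)%N by apply: (q_gt0 h); rewrite n_gt0 leq_addr.
lia.
Qed.

Lemma Tsum_le w k n : q_increasing w (n + k) ->
  (Tsum E w k.+1 n <= k.+1 * qelt E w (n + k))%N.
Proof.
move=> h; apply: (@leq_trans (\sum_(i < k.+1) qelt E w (n + k))).
  by apply: leq_sum => i _; apply: (q_le h); rewrite leq_add2l -ltnS ltn_ord /=.
by rewrite sum_nat_const card_ord.
Qed.

Lemma Tsum_lt w n j k : (0 < n)%N -> (j <= k)%N -> q_increasing w (n + k) ->
  (Tsum E w j n < Tsum E w k.+1 n)%N.
Proof.
move=> n_gt0; elim: k => [|k IH] jk h.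
  move: jk; rewrite leqn0 => /eqP->; rewrite TsumS /Tsum big_ord0 add0n.
  by apply: (q_gt0 h); rewrite addn0 n_gt0 /=.
have : (0 < qelt E w (n + k.+1))%N by apply: (q_gt0 h); lia.
rewrite TsumS; move: jk; rewrite leq_eqVlt => /predU1P[->|jk]; first lia.
by have := IH jk (q_increasingW (leq_add (leqnn n) (leqnSn k)) h); lia.
Qed.

End Enumeration.

Section OddSums.
Variables (R : realType) (d : measure_display) (T : measurableType d)
  (P : probability T R) (E : nat -> set T).
Hypothesis mE : forall m, measurable (E m).
Hypothesis indep : mutually_independent_events P E.
Hypothesis E_small : forall m, (m < 3)%N -> E m = set0.
Variable n : nat.
Hypothesis n_gt0 : (0 < n)%N.
Variables (B : nat -> nat) (beta : nat -> R).
Hypothesis beta_le : forall j t, (3 <= t <= B j)%N -> beta j <= pr P (E t).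
Hypothesis beta_le1 : forall j, beta j <= 1.

(* [controlled j] makes [q_1 < ... < q_(n+2j+2)] genuine elements, so that
   [Todd j = T_(2j+3)(n)] exceeds each of them. *)
Definition Todd j w := Tsum E w j.*2.+3 n.

Definition controlled j :=
  [set w | q_increasing E w (n + j.*2.+2) /\ (Todd j w <= B j)%N].

Definition missed j := [set w | controlled j w /\ ~ E (Todd j w) w].

Definition missed_all J := [set w | forall j, (j < J)%N -> missed j w].

Lemma mem_ge3 m w : E m w -> (3 <= m)%N.
Proof. by case: (ltnP m 3) => // /E_small ->. Qed.

Lemma Todd_gt j w : q_increasing E w (n + j.*2.+2) ->
  (qelt E w (n + j.*2.+2) < Todd j w)%N.
Proof. exact: Tsum_gt_last. Qed.

Lemma Todd_ge3 j w : q_increasing E w (n + j.*2.+2) -> (3 <= Todd j w)%N.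
Proof.
move=> h; apply: leq_trans (ltnW (Todd_gt h)); apply: (@mem_ge3 _ w).
by apply: (q_mem h); rewrite addn_gt0 n_gt0 leqnn.
Qed.

Lemma agree_Todd L w w' j : agree_below E L w w' ->
  q_increasing E w (n + j.*2.+2) -> (qelt E w (n + j.*2.+2) < L)%N ->
  q_increasing E w' (n + j.*2.+2) /\ Todd j w' = Todd j w.
Proof.
move=> ag h qL; have [h' q_eq] := agree_q ag h qL.
by split=> //; apply: Tsum_ext => i ij; apply: q_eq; rewrite leq_add2l.
Qed.

Lemma agree_missed L w w' j : agree_below E L w w' -> missed j w ->
  (Todd j w < L)%N -> missed j w'.
Proof.
move=> ag [[h TB] NET] TL; have [h' TE] := agree_Todd ag h (ltn_trans (Todd_gt h) TL).
split; first by split; rewrite ?TE.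
by rewrite TE => ET; apply: NET; apply/(ag _ TL).
Qed.

Lemma determined_missed_all J L : (forall j, (j < J)%N -> (B j < L)%N) ->
  determined E L (missed_all J).
Proof.
move=> BL w w' ag miss j jJ; apply: (agree_missed ag (miss j jJ)).
by have [[_ TB] _] := miss j jJ; exact: leq_ltn_trans TB (BL j jJ).
Qed.

Lemma determined_missed_step J t :
  determined E t (missed_all J `&` controlled J `&` [set w | Todd J w = t]).
Proof.
move=> w w' ag [[miss [h TB]] /= Tt].
have [h' TE] := agree_Todd ag h (leq_trans (Todd_gt h) (eq_leq Tt)).
split; last by rewrite /= TE.
split; last by rewrite /controlled /= TE.
move=> j jJ; apply: (agree_missed ag (miss j jJ)); rewrite -Tt.
by apply: (Tsum_lt n_gt0 _ h); lia.
Qed.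

Lemma measurable_missed_all J : measurable (missed_all J).
Proof.
apply: (@determined_measurable _ _ _ P _ mE indep (\sum_(j < J) B j).+1).
apply: determined_missed_all => j jJ.
by rewrite ltnS (bigD1 (Ordinal jJ)) //= leq_addr.
Qed.

Lemma pr_missed_allS J : pr P (missed_all J.+1) <= (1 - beta J) * pr P (missed_all J).
Proof.
pose D := missed_all J `&` controlled J.
have DB w : D w -> (Todd J w < (B J).+1)%N by case=> _ [].
have Dbeta w : D w -> beta J <= pr P (E (Todd J w)).
  by case=> _ [h TB]; apply: beta_le; rewrite Todd_ge3.
have [mD miss_le] := pr_stopped_miss mE indep DB (@determined_missed_step J) Dbeta.
have -> : missed_all J.+1 = D `&` [set w | ~ E (Todd J w) w].
  apply/seteqP; split=> [w miss|w [[miss ctrl] NET] j].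
    have [ctrl NET] := miss J (ltnSn J).
    by split=> //; split=> // j jJ; apply: miss; exact: ltnW.
  by rewrite ltnS leq_eqVlt => /predU1P[->|]; [split | exact: miss].
apply: le_trans miss_le _; apply: ler_wpM2l; first by rewrite subr_ge0.
by apply: pr_le => //; [exact: measurable_missed_all | move=> w []].
Qed.

Lemma pr_missed_all J : pr P (missed_all J) <= \prod_(j < J) (1 - beta j).
Proof.
elim: J => [|J IH]; first by rewrite big_ord0; apply/pr_le1/measurable_missed_all.
rewrite big_ord_recr /= mulrC; apply: le_trans (pr_missed_allS J) _.
by apply: ler_wpM2l; [rewrite subr_ge0 | exact: IH].
Qed.

End OddSums.

Section RealBounds.
Variable R : realFieldType.

Lemma ler_div_cross (a b c e : R) : 0 < b -> 0 < e -> a * e <= c * b -> a / b <= c / e.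
Proof. by move=> b0 e0 h; rewrite ler_pdivrMr // mulrAC ler_pdivlMr. Qed.

Lemma prod_compl_le_inv_sum (I : Type) (s : seq I) (f : I -> R) :
  (forall i, 0 <= f i <= 1) ->
  \prod_(i <- s) (1 - f i) <= (1 + \sum_(i <- s) f i)^-1.
Proof.
move=> f01; elim: s => [|a s IH]; first by rewrite !big_nil addr0 invr1.
rewrite !big_cons; have /andP[fa0 fa1] := f01 a.
have S0 : 0 <= \sum_(i <- s) f i by apply: sumr_ge0 => i _; case/andP: (f01 i).
apply: le_trans (_ : (1 - f a) * (1 + \sum_(i <- s) f i)^-1 <= _).
  by apply: ler_wpM2l; rewrite ?subr_ge0.
rewrite -[X in _ <= X]div1r; apply: ler_div_cross; [lra|lra|nra].
Qed.

Lemma harmonic_dyadic_ge m : m%:R / 2 <= \sum_(j < 2 ^ m) (j.+1%:R)^-1 :> R.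
Proof.
elim: m => [|m IH]; first by rewrite mul0r sumr_ge0 // => j _; rewrite invr_ge0.
rewrite expnS mul2n -addnn big_split_ord /= -natr1 mulrDl; apply: lerD => //.
have p2 : (0 : R) < (2 ^ m)%:R by rewrite ltr0n expn_gt0.
rewrite (_ : 1 / 2 = \sum_(j < 2 ^ m) ((2 ^ m + 2 ^ m)%:R)^-1); last first.
  by rewrite sumr_const card_ord -mulr_natr natrD; field; lra.
apply: ler_sum => j _; rewrite lef_pV2 ?posrE ?ltr0n ?addn_gt0 ?expn_gt0 //.
by rewrite ler_nat ltn_add2l.
Qed.

Lemma sum_geometric_le c M :
  \sum_(i < M) 2 / (2 ^ (c + i))%:R <= 4 / (2 ^ c)%:R :> R.
Proof.
elim: M c => [|M IH] c; first by rewrite big_ord0 divr_ge0 // ler0n.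
rewrite big_ord_recl addn0; under eq_bigr => i _ do rewrite lift0 addnS -addSn.
apply: le_trans (lerD (lexx _) (IH c.+1)) _.
have p2 : (0 : R) < (2 ^ c)%:R by rewrite ltr0n expn_gt0.
by rewrite expnS natrM le_eqVlt; apply/orP; left; apply/eqP; field; lra.
Qed.

End RealBounds.

Lemma ln_le_id (R : realType) (x : R) : 0 < x -> ln x <= x.
Proof. by move=> x0; apply/ltW/ln_sublinear. Qed.

Section Gaps.
Variables (R : realType) (d : measure_display) (T : measurableType d)
  (P : probability T R) (E : nat -> set T).
Hypothesis mE : forall m, measurable (E m).
Hypothesis indep : mutually_independent_events P E.
Hypothesis pr_E : forall m, (3 <= m)%N -> pr P (E m) = (ln (m%:R : R))^-1.

Definition gap i := pattern E [::] (index_iota (4 ^ i).+1 (4 ^ i.+1).+1).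

Definition some_gap c M := \bigcup_(i < M) gap (c + i).

Lemma pr_E01 m : 0 <= pr P (E m) <= 1.
Proof. by rewrite pr_ge0 ?pr_le1. Qed.

Lemma pr_E_ge m L : (3 <= m <= L)%N -> (ln (L%:R : R))^-1 <= pr P (E m).
Proof.
case/andP=> m3 mL; rewrite pr_E // lef_pV2 ?posrE ?ln_gt0 ?ltr1n; try lia.
by rewrite ler_ln ?posrE ?ltr0n ?ler_nat //; lia.
Qed.

Lemma pr_gap i : (0 < i)%N -> pr P (gap i) <= 2 / (2 ^ i)%:R.
Proof.
move=> i_gt0; have p4 : (4 <= 4 ^ i)%N by rewrite -{1}(expn1 4) leq_pexp2l.
pose N := ((4 ^ i.+1).+1 - (4 ^ i).+1)%N; pose L := ln ((4 ^ i.+1)%:R : R).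
have NE : N = (3 * 4 ^ i)%N by rewrite /N subSS expnS; lia.
have L_gt0 : 0 < L by rewrite ln_gt0 // ltr1n expnS; lia.
have L_le : L <= 4 * i.+1%:R.
  rewrite /L natrX lnXn // mulr_natr lerMn2r ln_le_id ?orbT //; lra.
have sum_ge : N%:R / L <= \sum_((4 ^ i).+1 <= m < (4 ^ i.+1).+1) pr P (E m).
  rewrite mulr_natl /N -sumr_const_nat; apply: ler_sum_nat => m /andP[m_gt m_le].
  by apply: pr_E_ge; rewrite ltnS in m_le; rewrite m_le andbT; lia.
have N_gt0 : (0 : R) < N%:R by rewrite ltr0n NE muln_gt0 expn_gt0.
rewrite /gap pr_pattern ?iota_uniq // big_nil mul1r.
apply: le_trans (prod_compl_le_inv_sum _ pr_E01) _.
apply: le_trans (_ : (N%:R / L)^-1 <= _).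
  have S0 : 0 <= \sum_((4 ^ i).+1 <= m < (4 ^ i.+1).+1) pr P (E m).
    by apply: sumr_ge0 => m _; case/andP: (pr_E01 m).
  rewrite lef_pV2 ?posrE ?divr_gt0 //; last lra.
  by apply: le_trans sum_ge _; rewrite lerDr.
rewrite invf_div; apply: le_trans (_ : 4 * i.+1%:R / N%:R <= _).
  by apply: ler_wpM2r => //; rewrite invr_ge0 ltW.
apply: ler_div_cross; rewrite -?NE // NE -!natrM ler_nat.
have : (i.+1 <= 2 ^ i)%N by exact: ltn_expl.
have -> : (4 ^ i = 2 ^ i * 2 ^ i)%N by rewrite -expnMn.
nia.
Qed.

Lemma measurable_some_gap c M : measurable (some_gap c M).
Proof. by apply: bigcup_measurable => i _; exact: measurable_pattern. Qed.

Lemma pr_some_gap c M : (0 < c)%N -> pr P (some_gap c M) <= 4 / (2 ^ c)%:R.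
Proof.
move=> c_gt0; apply: le_trans (sum_geometric_le _ c M).
rewrite -lee_fin -prE; last exact: measurable_some_gap.
rewrite /some_gap bigcup_mkord.
have mgap i : measurable (gap i) by exact: measurable_pattern.
apply: le_trans (Boole_inequality P (A := fun i => gap (c + i)) (fun i _ => mgap _)) _.
rewrite (eq_bigr (fun i : 'I_M => (pr P (gap (c + i)))%:E)) => [|i _]; last first.
  exact/prE/mgap.
rewrite sumEFin lee_fin; apply: ler_sum => i _.
by apply: pr_gap; rewrite addn_gt0 c_gt0.
Qed.

Lemma not_gap i w : ~ gap i w -> exists m, [/\ (4 ^ i < m)%N, (m <= 4 ^ i.+1)%N & E m w].
Proof.
move=> ngap; apply: contrapT => none; apply: ngap; split=> // m.
rewrite mem_index_iota ltnS => /andP[m_gt m_le] Em; apply: none; exists m.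
by split.
Qed.

Lemma no_gap_q w c M : ~ some_gap c M w ->
  q_increasing E w M /\ forall m, (m <= M)%N -> (qelt E w m <= 4 ^ (c + m))%N.
Proof.
elim: M => [|M IH] ngap.
  by split=> // m; rewrite leqn0 => /eqP->; exact: leq0n.
have [incM q_le4] : q_increasing E w M /\ forall m, (m <= M)%N -> (qelt E w m <= 4 ^ (c + m))%N.
  by apply: IH => -[i /= iM gi]; apply: ngap; exists i => //=; exact: ltnW.
have [m [m_gt m_le Em]] : exists m, [/\ (4 ^ (c + M) < m)%N, (m <= 4 ^ (c + M).+1)%N & E m w].
  by apply: not_gap => gM; apply: ngap; exists M => //=; exact: ltnSn.
have qM_lt : (qelt E w M < m)%N := leq_ltn_trans (q_le4 M (leqnn M)) m_gt.
have [q_lt EqS q_min] := next_eltP (ex_intro _ m (conj qM_lt Em)).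
rewrite -qeltS in q_lt EqS q_min; split.
  by move=> i; rewrite ltnS leq_eqVlt => /predU1P[->|/incM].
move=> j; rewrite leq_eqVlt => /predU1P[->|/q_le4//].
by apply: leq_trans (q_min _ qM_lt Em) _; rewrite addnS.
Qed.

End Gaps.

Section Main.
Variables (R : realType) (d : measure_display) (T : measurableType d)
  (P : probability T R) (E : nat -> set T).
Hypothesis mE : forall m, measurable (E m).
Hypothesis indep : mutually_independent_events P E.
Hypothesis E_small : forall m, (m < 3)%N -> E m = set0.
Hypothesis pr_E : forall m, (3 <= m)%N -> pr P (E m) = (ln (m%:R : R))^-1.

(* [T_(2j+3)(n) <= (2j+3) q_(n+2j+2)] and [q_m <= 4^(c+m)] when no [gap i] with
   [i >= c] occurs (see [no_gap_q]). *)
Definition Tbound c n j := (j.*2.+3 * 4 ^ (c + (n + j.*2.+2)))%N.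

Definition pbound c n j : R := (ln (Tbound c n j)%:R)^-1.

Lemma Tbound_ge3 c n j : (3 <= Tbound c n j)%N.
Proof. by rewrite /Tbound -[3%N]muln1 leq_mul // expn_gt0. Qed.

Lemma pbound_le_pr c n j t : (3 <= t <= Tbound c n j)%N -> pbound c n j <= pr P (E t).
Proof. exact: pr_E_ge. Qed.

Lemma pbound01 c n j : 0 <= pbound c n j <= 1.
Proof.
rewrite invr_ge0 ln_ge0 ?ler1n /=; last exact: leq_trans (Tbound_ge3 c n j).
by apply: le_trans (pr_le1 P (mE 3)); apply: pbound_le_pr; rewrite Tbound_ge3.
Qed.

Lemma pbound_ge c n j : ((4 * c + 4 * n + 11)%:R * j.+1%:R)^-1 <= pbound c n j.
Proof.
have k_gt0 : (0 : R) < (4 * c + 4 * n + 11)%:R * j.+1%:R by rewrite -natrM ltr0n; lia.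
rewrite /pbound lef_pV2 ?posrE ?ln_gt0 ?ltr1n //; last exact: leq_trans _ (Tbound_ge3 c n j).
rewrite /Tbound natrM lnM ?posrE ?ltr0n ?expn_gt0 // natrX lnXn //.
apply: le_trans (_ : j.*2.+3%:R + 4 *+ (c + (n + j.*2.+2)) <= _).
  apply: lerD; first by rewrite ln_le_id ?ltr0n.
  by rewrite lerMn2r ln_le_id ?orbT //; lra.
by rewrite -(mulr_natr 4) -!natrM -natrD ler_nat; nia.
Qed.

Lemma sum_pbound_ge c n m :
  (4 * c + 4 * n + 11)%:R^-1 * (m%:R / 2) <= \sum_(j < 2 ^ m) pbound c n j.
Proof.
apply: le_trans (_ : \sum_(j < 2 ^ m) (4 * c + 4 * n + 11)%:R^-1 * j.+1%:R^-1 <= _).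
  by rewrite -mulr_sumr ler_wpM2l ?invr_ge0 ?harmonic_dyadic_ge.
by apply: ler_sum => j _; rewrite -invfM pbound_ge.
Qed.

Lemma failure_bound_small n e : 0 < e -> exists c J,
  4 / (2 ^ c.+1)%:R + (1 + \sum_(j < J) pbound c.+1 n j)^-1 <= e.
Proof.
move=> e_gt0; pose c := Num.Def.archi_bound (8 / e).
have c_gt : 8 / e < c%:R by apply: archi_boundP; rewrite ltW ?divr_gt0.
pose K : R := (4 * c.+1 + 4 * n + 11)%:R.
have K_gt0 : 0 < K by rewrite ltr0n.
pose m := Num.Def.archi_bound (4 * K / e).
have m_gt : 4 * K / e < m%:R by apply: archi_boundP; rewrite ltW ?divr_gt0 ?mulr_gt0.
exists c, (2 ^ m)%N; rewrite [e]splitr; apply: lerD.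
  have c_le : c%:R <= (2 ^ c.+1)%:R :> R.
    by rewrite ler_nat ltnW // (leq_trans (ltn_expl c (isT : 1 < 2)%N)) ?leq_pexp2l.
  have c_gt0 : (0 : R) < (2 ^ c.+1)%:R by rewrite ltr0n expn_gt0.
  apply: ler_div_cross => //; rewrite ltr_pdivrMr // in c_gt; nra.
have S_ge : 2 / e <= \sum_(j < 2 ^ m) pbound c.+1 n j.
  apply: le_trans (sum_pbound_ge c.+1 n m); rewrite -/K.
  rewrite (_ : 2 / e = K^-1 * (4 * K / e / 2)); last by field; rewrite !gt_eqF.
  apply: ler_wpM2l; first by rewrite invr_ge0 ltW.
  by apply: ler_wpM2r; rewrite ?invr_ge0 // ltW.
have S_gt0 : 0 < \sum_(j < 2 ^ m) pbound c.+1 n j.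
  by apply: lt_le_trans S_ge; rewrite divr_gt0.
rewrite -[e / 2]invf_div lef_pV2 ?posrE ?divr_gt0 //; last lra.
by apply: le_trans S_ge _; rewrite lerDr.
Qed.

Definition fail n := [set w | forall k, odd k -> (3 <= k)%N -> ~ E (Tsum E w k n) w].

Lemma fail_sub n c J : (0 < n)%N ->
  fail n `<=` some_gap E c (n + J.*2) `|` missed_all E n (Tbound c n) J.
Proof.
move=> n_gt0 w failw; have [|ngap] := pselect (some_gap E c (n + J.*2) w); first by left.
right; have [inc q_le4] := no_gap_q ngap; move=> j jJ.
have incj : q_increasing E w (n + j.*2.+2) by apply: q_increasingW inc; lia.
split; first split=> //.
  apply: leq_trans (Tsum_le incj) _; rewrite /Tbound leq_mul2l q_le4 ?orbT //; lia.
by apply: failw; rewrite //= odd_double.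
Qed.

(* A measurable superset of [fail n], which itself is not evidently measurable. *)
Definition fail_cover n :=
  \bigcap_c \bigcap_J (some_gap E c.+1 (n + J.*2) `|` missed_all E n (Tbound c.+1 n) J).

Lemma measurable_fail_cover n : (0 < n)%N -> measurable (fail_cover n).
Proof.
move=> n_gt0; apply: bigcapT_measurable => c; apply: bigcapT_measurable => J.
apply: measurableU; first exact: measurable_some_gap.
exact: (measurable_missed_all mE indep n_gt0 (Tbound c.+1 n) J).
Qed.

Lemma pr_fail_cover n : (0 < n)%N -> pr P (fail_cover n) = 0.
Proof.
move=> n_gt0; have mF := measurable_fail_cover n_gt0.
apply/eqP; rewrite eq_le pr_ge0 // andbT; apply/ler_addgt0Pr => e /(failure_bound_small n).
move=> [c [J bound_le]]; rewrite add0r; apply: le_trans bound_le.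
have mU : measurable (some_gap E c.+1 (n + J.*2)) by exact: measurable_some_gap.
have mA : measurable (missed_all E n (Tbound c.+1 n) J).
  exact: (measurable_missed_all mE indep n_gt0 (Tbound c.+1 n) J).
have cover_le : pr P (fail_cover n) <=
    pr P (some_gap E c.+1 (n + J.*2) `|` missed_all E n (Tbound c.+1 n) J).
  by apply: pr_le => //; [exact: measurableU | move=> w /(_ c I J I)].
apply: le_trans cover_le _.
apply: le_trans (pr_setU_le P mU mA) _; apply: lerD; first exact: pr_some_gap.
apply: le_trans (pr_missed_all mE indep E_small n_gt0 (@pbound_le_pr c.+1 n) _ J) _.
  by move=> j; case/andP: (pbound01 c.+1 n j).
by apply: prod_compl_le_inv_sum => j; exact: pbound01.
Qed.

End Main.

Theorem mainTheorem2 (R : realType) (d : measure_display) (T : measurableType d)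
  (P : probability T R) (E : nat -> set T) :
  cramer_model P E ->
  {ae P, forall w, forall n : nat, (1 <= n)%N ->
     exists k : nat, [/\ odd k, (3 <= k)%N & E (Tsum E w k n) w]}.
Proof.
case=> mE indep P_E E_small.
have pr_E m : (3 <= m)%N -> pr P (E m) = (ln (m%:R : R))^-1 by move=> m3; rewrite /pr P_E.
have null : P.-negligible (\bigcup_n fail_cover E n.+1).
  apply: negligible_bigcup => n; have mF := measurable_fail_cover mE indep (ltn0Sn n).
  by apply/negligibleP => //; apply: etrans (prE P mF) _; rewrite pr_fail_cover.
apply: negligibleS null => w /= not_all.
have [n [n_gt0 failw]] : exists n, (0 < n)%N /\ fail E n w.
  apply: contrapT => none; apply: not_all => n n_gt0; apply: contrapT => nk; apply: none.
  by exists n; split=> // k k_odd k3 Ek; apply: nk; exists k.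
case: n n_gt0 failw => // n _ failw; exists n => // c _ J _.
exact: fail_sub.
Qed.
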